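(* Let $f,g:\mathbb{R}^n\to\mathbb{R}$ satisfy assumptions (A1)–(A4) below, let $\zeta\in[0,1)$ and $x_0\in\Omega=\{x:g(x)\le0\}$. Let $x_\zeta^\sharp=x(t^\sharp;\zeta,x_0)$ be the solution point, where $t^\sharp$ is the first time with $g(x(t^\sharp;\zeta,x_0))=0$ (so $g(x(t;\zeta,x_0))<0$ for $t<t^\sharp$). Then $$\epsilon(x_\zeta^\sharp)=\left|\frac{\nabla f(x_\zeta^\sharp)}{|\nabla f(x_\zeta^\sharp)|}+\frac{\nabla g(x_\zeta^\sharp)}{|\nabla g(x_\zeta^\sharp)|}\right|\le\sqrt{2(1-\zeta)}.$$
   Context: Assumptions: (A1) $\lim_{|x|\to\infty} f(x)=+\infty$; (A2) $\nabla f(x)\neq 0$ for all $x\in\Omega$; (A3) $\nabla g(x)\neq 0$ for all $x\in\Omega$; (A4) $f,g$ twice continuously differentiable. For $\zeta\in[0,1)$, $\mathbf{s}_\zeta(x)=-\frac{\nabla f(x)}{|\nabla f(x)|}-\zeta\frac{\nabla g(x)}{|\nabla g(x)|}$ ($|\cdot|$ Euclidean norm), and $x(t;\zeta,x_0)$ is the solution of $\frac{dx}{dt}=\mathbf{s}_\zeta(x)$, $x(0)=x_0$, on its maximal interval of existence in $E=\{x:\nabla f(x)\ne0,\nabla g(x)\ne0\}$. *)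

From HB Require Import structures.
From mathcomp Require Import all_boot all_order all_algebra.
From mathcomp Require Import all_classical all_reals all_analysis.
Set Implicit Arguments. Unset Strict Implicit. Unset Printing Implicit Defensive.
Import Order.TTheory GRing.Theory Num.Theory.
Import numFieldNormedType.Exports.
Local Open Scope ring_scope.

Section Defs.
Variables (R : realType) (n : nat).

Definition dotv (u v : 'rV[R]_n) : R := \sum_(i < n) u 0 i * v 0 i.
Definition enorm (v : 'rV[R]_n) : R := Num.sqrt (dotv v v).

Definition ebasis (i : 'I_n) : 'rV[R]_n := delta_mx 0 i.

Definition grad (f : 'rV[R]_n -> R) (x : 'rV[R]_n) : 'rV[R]_n :=
  \row_(i < n) ('D_(ebasis i) f x).

Definition coercive (f : 'rV[R]_n -> R) : Prop :=
  forall M : R, exists r : R, forall x, r < enorm x -> M < f x.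

Definition C2 (f : 'rV[R]_n -> R) : Prop :=
  (forall x, differentiable f x) /\
  (forall x, differentiable (grad f) x) /\
  (forall i j : 'I_n,
     continuous (fun x => 'D_(ebasis j) (fun y => grad f y 0 i) x)).

Definition s_field (f g : 'rV[R]_n -> R) (zeta : R) (x : 'rV[R]_n) : 'rV[R]_n :=
  - ((enorm (grad f x))^-1 *: grad f x) - zeta *: ((enorm (grad g x))^-1 *: grad g x).

Definition eps_opt (f g : 'rV[R]_n -> R) (x : 'rV[R]_n) : R :=
  enorm ((enorm (grad f x))^-1 *: grad f x + (enorm (grad g x))^-1 *: grad g x).

End Defs.

(* At the first time t# at which the trajectory reaches the boundary g = 0, the
   function t |-> g (x t) goes from negative values up to 0, so its derivative
   <grad g, s_zeta> at t# is nonnegative.  Writing u and v for the normalised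
   gradients of f and g there, this reads -<u, v> - zeta >= 0, i.e.
   <u, v> <= -zeta, and therefore eps^2 = |u + v|^2 = 2 + 2 <u, v> <= 2 (1 - zeta). *)
From HB Require Import structures.
From mathcomp Require Import all_boot all_order all_algebra.
From mathcomp Require Import all_classical all_reals all_analysis.
From mathcomp Require Import lra.

Set Implicit Arguments.
Unset Strict Implicit.
Unset Printing Implicit Defensive.

Import Order.TTheory GRing.Theory Num.Theory.
Import numFieldNormedType.Exports.
Local Open Scope ring_scope.

Section EuclideanSpace.
Variables (R : realType) (n : nat).
Implicit Types u v w : 'rV[R]_n.

Definition unitv v : 'rV[R]_n := (enorm v)^-1 *: v.

Lemma dotvC u v : dotv u v = dotv v u.
Proof. by apply: eq_bigr => i _; rewrite mulrC. Qed.

Lemma dotvDr u v w : dotv u (v + w) = dotv u v + dotv u w.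
Proof. by rewrite /dotv -big_split; apply: eq_bigr => i _; rewrite mxE mulrDr. Qed.

Lemma dotvZr a u v : dotv u (a *: v) = a * dotv u v.
Proof. by rewrite /dotv mulr_sumr; apply: eq_bigr => i _; rewrite mxE mulrCA. Qed.

Lemma dotvNr u v : dotv u (- v) = - dotv u v.
Proof. by rewrite /dotv -sumrN; apply: eq_bigr => i _; rewrite mxE mulrN. Qed.

Lemma dotvBr u v w : dotv u (v - w) = dotv u v - dotv u w.
Proof. by rewrite dotvDr dotvNr. Qed.

Lemma dotvDl u v w : dotv (v + w) u = dotv v u + dotv w u.
Proof. by rewrite dotvC dotvDr dotvC (dotvC u). Qed.

Lemma dotvZl a u v : dotv (a *: v) u = a * dotv v u.
Proof. by rewrite dotvC dotvZr dotvC. Qed.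

Lemma dotvv_ge0 u : 0 <= dotv u u.
Proof. by apply: sumr_ge0 => i _; rewrite -expr2 sqr_ge0. Qed.

Lemma dotvv_eq0 u : (dotv u u == 0) = (u == 0).
Proof.
apply/idP/eqP => [/eqP uu0|->]; last by rewrite /dotv big1 // => i _; rewrite mxE mul0r.
apply/rowP => i; rewrite mxE; apply/eqP; rewrite -sqrf_eq0 expr2.
by apply/eqP/(psumr_eq0P _ uu0) => // j _; rewrite -expr2 sqr_ge0.
Qed.

Lemma enorm_sqr u : enorm u ^+ 2 = dotv u u.
Proof. by rewrite /enorm sqr_sqrtr // dotvv_ge0. Qed.

Lemma enorm_gt0 u : u != 0 -> 0 < enorm u.
Proof. by move=> u0; rewrite sqrtr_gt0 lt_def dotvv_eq0 u0 dotvv_ge0. Qed.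

Lemma dotv_unitv u : u != 0 -> dotv (unitv u) (unitv u) = 1.
Proof.
move=> /enorm_gt0 u_gt0.
by rewrite dotvZl dotvZr -enorm_sqr mulrA -expr2 -exprMn mulVf ?gt_eqF ?expr1n.
Qed.

Lemma dotv_unitvl u v : dotv (unitv u) v = (enorm u)^-1 * dotv u v.
Proof. exact: dotvZl. Qed.

Lemma dotv_unitvDsqr u v : u != 0 -> v != 0 ->
  dotv (unitv u + unitv v) (unitv u + unitv v) = 2 + 2 * dotv (unitv u) (unitv v).
Proof.
by move=> u0 v0; rewrite !dotvDl !dotvDr !dotv_unitv // (dotvC (unitv v)); lra.
Qed.

Lemma diff_dotv_grad (g : 'rV[R]_n -> R) y v : differentiable g y ->
  'd g y v = dotv (grad g y) v.
Proof.
move=> dg; rewrite {1}(row_sum_delta v) linear_sum /dotv; apply: eq_bigr => i _.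
by rewrite linearZ /= -deriveE // mxE mulrC.
Qed.

Lemma is_derive_comp_grad (g : 'rV[R]_n -> R) (x : R -> 'rV[R]_n) (t : R) dx :
  is_derive t 1 x dx -> differentiable g (x t) ->
  is_derive t 1 (g \o x) (dotv (grad g (x t)) dx).
Proof.
move=> [dx_ex <-] dg; have dxt : differentiable x t by apply/derivable1_diffP.
have dgx : differentiable (g \o x) t := differentiable_comp dxt dg.
apply: DeriveDef; first exact/derivable1_diffP.
by rewrite deriveE // diff_comp // /= diff_dotv_grad // -deriveE.
Qed.

End EuclideanSpace.

Local Open Scope classical_set_scope.

Lemma is_derive_ge0_first_root (R : realType) (h : R -> R) (a t d : R) : a < t ->
  is_derive t 1 h d -> (forall s, a <= s < t -> h s < 0) -> h t = 0 -> 0 <= d.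
Proof.
move=> a_lt_t [dh <-] h_neg ht0.
have left_sub : (0 : R)^'- `=>` 0^'.
  move=> A; rewrite /dnbhs /at_left /within /=.
  by apply: filterS => e Ae e_lt0; apply: Ae; rewrite lt_eqF.
have dh_left : (fun e : R => e^-1 *: ((h \o shift t) (e *: 1) - h t)) @ 0^'- --> 'D_1 h t.
  exact: cvg_trans (cvg_app _ left_sub) dh.
rewrite -(cvg_lim _ dh_left) //; apply: limr_ge; first exact: cvgP dh_left.
near=> e.
have e_lt0 : e < 0 by near: e; exact: nbhs_left_lt.
have e_gt : a - t < e by near: e; apply: nbhs_left_gt; rewrite subr_lt0.
rewrite /= ht0 subr0 [e *: 1]mulr1 addrC.
have : h (t + e) < 0 by apply: h_neg; apply/andP; split; lra.
by move=> hte; rewrite ltW // nmulr_rgt0 // invr_lt0.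
Unshelve. all: by end_near.
Qed.

Local Close Scope classical_set_scope.

Lemma dotv_unitv_leN (R : realType) (n : nat) (F G : 'rV[R]_n) (zeta : R) :
  G != 0 -> 0 <= dotv G (- unitv F - zeta *: unitv G) ->
  dotv (unitv F) (unitv G) <= - zeta.
Proof.
move=> G0 dG_ge0.
have : 0 <= dotv (unitv G) (- unitv F - zeta *: unitv G).
  by rewrite dotv_unitvl mulr_ge0 // invr_ge0 ltW // enorm_gt0.
by rewrite dotvBr dotvNr dotvZr dotv_unitv // mulr1 dotvC; lra.
Qed.

Theorem theorem5p12 (R : realType) (n : nat) (f g : 'rV[R]_n -> R)
  (A1 : coercive f)
  (A2 : forall x, g x <= 0 -> grad f x != 0)
  (A3 : forall x, g x <= 0 -> grad g x != 0)
  (A4f : C2 f) (A4g : C2 g)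
  (zeta : R) (hzeta0 : 0 <= zeta) (hzeta1 : zeta < 1)
  (x0 : 'rV[R]_n) (hx0 : g x0 <= 0)
  (x : R -> 'rV[R]_n) (tsharp : R)
  (hx_init : x 0 = x0)
  (hx_ode : forall t, 0 <= t <= tsharp -> is_derive t (1 : R) x (s_field f g zeta (x t)))
  (htpos : 0 < tsharp)
  (hg_before : forall t, 0 <= t < tsharp -> g (x t) < 0)
  (hg_sharp : g (x tsharp) = 0) :
  eps_opt f g (x tsharp) <= Num.sqrt (2 * (1 - zeta)).
Proof.
set y := x tsharp.
have gy_le0 : g y <= 0 by rewrite hg_sharp.
have dgx : is_derive tsharp 1 (g \o x) (dotv (grad g y) (s_field f g zeta y)).
  by apply: is_derive_comp_grad; [apply: hx_ode; rewrite lexx ltW | exact: A4g.1].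
have dgx_ge0 := is_derive_ge0_first_root htpos dgx hg_before hg_sharp.
have uv_le := dotv_unitv_leN (A3 _ gy_le0) dgx_ge0.
rewrite /eps_opt -!/(unitv _) /enorm ler_wsqrtr //.
rewrite dotv_unitvDsqr; [lra | exact: A2 | exact: A3].
Qed.
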